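(* Let $\widehat{\mathbf M}=(\hat{\mathbb X},\hat{\mathbb U},\mathbb Y,\hat x_0,\hat{\mathbf t},\hat h)$ and $\mathbf M=(\mathbb X,\mathbb U,\mathbb Y,x_0,\mathbf t,h)$ be gMDPs with $\widehat{\mathbf M}\preceq^\delta_0\mathbf M$ via relation $\mathcal R$, interface $\mathcal U_v$ and lifted kernel $\mathbb W_{\mathbf t}$, let $\psi$ be an scLTL formula with DFA $\mathcal A_\psi=(Q,q_0,\Sigma,F,\tau)$, and let $\mu:\hat{\mathbb X}\times Q\to\hat{\mathbb U}$ be a mapping. Let $V:\hat{\mathbb X}\times Q\to[0,1]$ and $V_{\|}:\hat{\mathbb X}\times\mathbb X\times Q\to[0,1]$ satisfy $V(\hat x,q)\le V_{\|}(\hat x,x,q)$ for all $(\hat x,x)\in\mathcal R$ and $q\in Q$. Then $$\mathbf T^\mu_\delta(V)(\hat x,q)\le\mathbf T^\mu(V_{\|})(\hat x,x,q)\qquad\forall(\hat x,x)\in\mathcal R,\ q\in Q,$$ where $\mathbf T^\mu_\delta$ is the $\delta$-robust operator with respect to $\widehat{\mathbf M}\otimes\mathcal A_\psi$ and $\mathbf T^\mu$ on the right is the Bellman operator with respect to $(\widehat{\mathbf M}\|_{\mathcal R}\mathbf M)\otimes\mathcal A_\psi$.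
   Context: A gMDP is $(\mathbb X,\mathbb U,\mathbb Y,x_0,\mathbf t,h)$ with Polish state/input spaces, output space $\mathbb Y$ with metric $\mathbf d_{\mathbb Y}$, initial state, stochastic kernel $\mathbf t(\cdot\mid x,u)$ and measurable output map $h$. $\widehat{\mathbf M}\preceq^\delta_\epsilon\mathbf M$ means there exist an interface $\mathcal U_v:\hat{\mathbb U}\times\hat{\mathbb X}\times\mathbb X\to\mathcal P(\mathbb U)$, a measurable relation $\mathcal R\subseteq\hat{\mathbb X}\times\mathbb X$ and a Borel kernel $\mathbb W_{\mathbf t}(\cdot\mid\hat u,\hat x,x)$ on $\hat{\mathbb X}\times\mathbb X$ with $(\hat x_0,x_0)\in\mathcal R$ and, for all $(\hat x,x)\in\mathcal R$: $\mathbf d_{\mathbb Y}(\hat h(\hat x),h(x))\le\epsilon$, and for all $\hat u$, $\mathbb W=\mathbb W_{\mathbf t}(\cdot\mid\hat u,\hat x,x)$ has marginals $\hat{\mathbf t}(\cdot\mid\hat x,\hat u)$ on $\hat{\mathbb X}$ and $\mathbf t(\cdot\mid x,\mathcal U_v(\hat u,\hat x,x))$ on $\mathbb X$, and $\mathbb W(\mathcal R)\ge1-\delta$. The coupling gMDP $\widehat{\mathbf M}\|_{\mathcal R}\mathbf M$ has state space $\hat{\mathbb X}\times\mathbb X$, input space $\hat{\mathbb U}$, initial state $(\hat x_0,x_0)$, kernel $\mathbb W_{\mathbf t}$ and output map $(\hat x,x)\mapsto h(x)$. $\Sigma=2^{\mathsf{AP}}$, $\mathsf L:\mathbb Y\to\Sigma$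 measurable labelling, $\mathcal A_\psi$ a DFA (accepting set $F$, transition $\tau:Q\times\Sigma\to Q$) for $\psi$. For a gMDP $\mathbf N$ with state space $\mathbb Z$, kernel $\mathbf t_{\mathbf N}$ and output map $h_{\mathbf N}$, the product $\mathbf N\otimes\mathcal A_\psi$ has states $\mathbb Z\times Q$ and kernel $\bar{\mathbf t}(dz'\times\{q'\}\mid z,q,u)=\mathbf 1_{\{q'\}}(\tau(q,\mathsf L(h_{\mathbf N}(z'))))\mathbf t_{\mathbf N}(dz'\mid z,u)$; its Bellman operator for an input map $\mu$ is $\mathbf T^\mu(V)(z,q)=\int\max\{\mathbf 1_F(q'),V(z',q')\}\bar{\mathbf t}(dz'\times\{q'\}\mid z,q,\mu)$ (on the coupling, the input $\mu(\hat x,q)$ depends only on the $\hat{\mathbb X}$-component). The $\delta$-robust operator is $\mathbf T^\mu_\delta(V)=\mathbf L(\mathbf T^\mu(V)-\delta)$ with $\mathbf L(r)=\min(1,\max(0,r))$. *)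

From HB Require Import structures.
From mathcomp Require Import all_boot all_order all_algebra.
From mathcomp Require Import all_classical all_reals all_analysis.
Import Order.TTheory GRing.Theory Num.Theory.
Import numFieldNormedType.Exports.

Set Implicit Arguments.
Unset Strict Implicit.
Unset Printing Implicit Defensive.

Local Open Scope classical_set_scope.
Local Open Scope ring_scope.

Definition is_metric {R : realType} {Y : Type} (d : Y -> Y -> R) : Prop :=
  (forall x y, 0 <= d x y) /\ (forall x y, d x y = 0 <-> x = y) /\
  (forall x y, d x y = d y x) /\ (forall x y z, d x z <= d x y + d y z).

(* measurability of a labelling L : Y -> 2^AP (discrete sigma-algebra on 2^AP) *)
Definition label_measurable {dY} {Y : measurableType dY} {AP : finType}
  (L : Y -> {set AP}) : Prop :=
  forall s : {set AP}, measurable (L @^-1` [set s]).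

(* Bellman operator of the product N (x) A_psi, for a gMDP N with state space Z,
   input space U, kernel tN, output map hN, and input map mu : Z x Q -> U.
   The integral over Z x Q against the product kernel
     tbar(dz' x {q'} | z,q,u) = 1_{q'}(tau(q, L(hN z'))) tN(dz' | z,u)
   is written as an integral over z' of the sum over q' in the finite set Q. *)
Definition bellman {R : realType} {dZ dU dY}
  {Z : measurableType dZ} {U : measurableType dU} {Y : measurableType dY}
  {AP Q : finType}
  (tN : R.-pker (Z * U)%type ~> Z) (hN : Z -> Y) (L : Y -> {set AP})
  (tau : Q -> {set AP} -> Q) (F : {set Q})
  (mu : Z -> Q -> U) (V : Z -> Q -> R) (z : Z) (q : Q) : \bar R :=
  (\int[tN (z, mu z q)]_z'
     (\sum_(q' : Q) ((q' == tau q (L (hN z')))%:R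
                     * Num.max (q' \in F)%:R (V z' q')))%:E)%E.

Definition clip01 {R : realType} (r : \bar R) : \bar R :=
  Order.min 1%E (Order.max 0%E r).

Definition robust_bellman {R : realType} {dZ dU dY}
  {Z : measurableType dZ} {U : measurableType dU} {Y : measurableType dY}
  {AP Q : finType} (delta : R)
  (tN : R.-pker (Z * U)%type ~> Z) (hN : Z -> Y) (L : Y -> {set AP})
  (tau : Q -> {set AP} -> Q) (F : {set Q})
  (mu : Z -> Q -> U) (V : Z -> Q -> R) (z : Z) (q : Q) : \bar R :=
  clip01 (bellman tN hN L tau F mu V z q - delta%:E)%E.

(* Mh <=^delta_eps M  via interface Uv, relation Rel and lifted kernel W.
   W(. | uh, xh, x) is encoded as W ((xh, x), uh). *)
Definition sim_rel {R : realType} {dXh dUh dX dU dY}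
  {Xh : measurableType dXh} {Uh : measurableType dUh}
  {X : measurableType dX} {U : measurableType dU} {Y : measurableType dY}
  (d : Y -> Y -> R) (eps delta : R)
  (xh0 : Xh) (th : R.-pker (Xh * Uh)%type ~> Xh) (hh : Xh -> Y)
  (x0 : X) (t : R.-pker (X * U)%type ~> X) (h : X -> Y)
  (Uv : Uh -> Xh -> X -> probability U R)
  (Rel : set (Xh * X))
  (W : R.-pker ((Xh * X) * Uh)%type ~> (Xh * X)%type) : Prop :=
  measurable Rel /\ Rel (xh0, x0) /\
  forall xh x, Rel (xh, x) ->
    d (hh xh) (h x) <= eps /\
    forall uh : Uh,
      (forall A : set Xh, measurable A ->
         W ((xh, x), uh) (A `*` setT) = th (xh, uh) A) /\
      (forall B : set X, measurable B ->
         W ((xh, x), uh) (setT `*` B) = (\int[Uv uh xh x]_u t (x, u) B)%E) /\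
      ((1 - delta)%:E <= W ((xh, x), uh) Rel)%E.

From HB Require Import structures.
From mathcomp Require Import all_boot all_order all_algebra.
From mathcomp Require Import all_classical all_reals all_analysis.
From mathcomp Require Import measurable_realfun.
Import Order.TTheory GRing.Theory Num.Theory.
Import numFieldNormedType.Exports.
Local Open Scope classical_set_scope.
Local Open Scope ring_scope.

(* On the relation the two states have the same output (epsilon = 0), so both
   products move the automaton to the same successor q', and there the integrand
   max(1_F(q'), V) of the abstract operator is dominated by the integrand
   max(1_F(q'), V_par) of the coupled one.  Off the relation the integrand is at
   most 1, and the lifted kernel charges the complement of the relation with
   mass at most delta.  Integrating against the lifted kernel, whose first
   marginal is the abstract kernel, gives T(V) <= T(V_par) + delta, and clipping
   T(V) - delta to [0, 1] preserves the bound since T(V_par) >= 0. *)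

Lemma is_metric_le0 {R : realType} {Y : Type} {d : Y -> Y -> R} {x y : Y} :
  is_metric d -> d x y <= 0 -> x = y.
Proof.
by move=> [d_ge0 [d_eq0 _]] dxy; apply/d_eq0/eqP; rewrite eq_le dxy d_ge0.
Qed.

Lemma sum_delta_mul (R : pzSemiRingType) (I : finType) (j : I) (F : I -> R) :
  \sum_(i : I) (i == j)%:R * F i = F j.
Proof.
rewrite (bigD1 j) //= eqxx mul1r big1 ?addr0 // => i /negbTE ->.
by rewrite mul0r.
Qed.

Lemma measurable_fun_select d (T : measurableType d) (R : realType)
    (G : finType) (k : T -> G) (f : G -> T -> R) :
  (forall g, measurable (k @^-1` [set g])) ->
  (forall g, measurable_fun setT (f g)) ->
  measurable_fun setT (fun x => f (k x) x).
Proof.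
move=> mk mf.
have -> : (fun x => f (k x) x) =
          (fun x => \sum_(g : G) \1_(k @^-1` [set g]) x * f g x).
  apply/funext => x; rewrite (bigD1 (k x)) //= indicE mem_set // mul1r.
  rewrite big1 ?addr0 // => g /eqP gk; rewrite indicE memNset ?mul0r //.
  by move=> /= kx; apply: gk.
by apply: measurable_sum => g; apply: measurable_funM.
Qed.

Lemma ge0_integral_fst_marginal {d1 d2 : measure_display}
    {T1 : measurableType d1} {T2 : measurableType d2} {R : realType}
    (P : {measure set (T1 * T2) -> \bar R})
    (mu : {measure set T1 -> \bar R}) (f : T1 -> \bar R) :
  (forall A, measurable A -> P (A `*` setT) = mu A) ->
  measurable_fun setT f -> (forall x, 0 <= f x)%E ->
  (\int[P]_z f z.1 = \int[mu]_x f x)%E.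
Proof.
move=> marg mf f_ge0.
transitivity (\int[pushforward P fst]_x f x)%E.
  by rewrite (ge0_integral_pushforward measurable_fst).
apply: eq_measure_integral => A mA _.
by rewrite -marg // setXT.
Qed.

Section integral_bound.
Context {d : measure_display} {T : measurableType d} {R : realType}.
Variable mu : {measure set T -> \bar R}.
Local Open Scope ereal_scope.

Lemma integral_le_add_measureC (A : set T) (f g : T -> R) :
  measurable A -> measurable_fun setT f -> measurable_fun setT g ->
  (forall z, (0 <= f z <= 1)%R) -> (forall z, (0 <= g z)%R) ->
  (forall z, A z -> (f z <= g z)%R) ->
  \int[mu]_z (f z)%:E <= \int[mu]_z (g z)%:E + mu (~` A).
Proof.
move=> mA mf mg f01 g0 fg.
have mAC : measurable (~` A) by exact: measurableC.
have -> : mu (~` A) = \int[mu]_z (\1_(~` A) z)%:E.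
  by rewrite integral_indic // setIT.
rewrite -ge0_integralD //; last 3 first.
- by move=> z _; rewrite lee_fin.
- exact/measurable_EFinP.
- exact/measurable_EFinP/measurable_indic.
apply: ge0_le_integral => //.
- by move=> z _; rewrite lee_fin; case/andP: (f01 z).
- exact/measurable_EFinP.
- by apply: emeasurable_funD; apply/measurable_EFinP => //; exact: measurable_indic.
move=> z _; rewrite -EFinD lee_fin indicE.
have [Az|nAz] := pselect (A z).
  by rewrite memNset ?addr0 ?fg // => /(_ Az).
by case/andP: (f01 z) => _ f1; rewrite mem_set // (le_trans f1) // lerDr.
Qed.

Lemma measureC_le (A : set T) (delta : R) :
  measurable A -> mu setT = 1 -> (1 - delta)%:E <= mu A ->
  mu (~` A) <= delta%:E.
Proof.
move=> mA mu1 muA.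
have muU : mu A + mu (~` A) = 1.
  by rewrite -measureU ?setUv ?setICr //; exact: measurableC.
have muA_fin : mu A \is a fin_num.
  by rewrite ge0_fin_numE // (le_lt_trans _ (ltry 1)) // -mu1 le_measure ?inE.
have -> : mu (~` A) = 1 - mu A by rewrite -muU addeAC subee // add0e.
by rewrite leeBlDr // addeC -leeBlDr // -EFinB.
Qed.

End integral_bound.

Lemma clip01_subr_le (R : realType) (a b : \bar R) (delta : R) :
  (0 <= b)%E -> (a <= b + delta%:E)%E -> (clip01 (a - delta%:E) <= b)%E.
Proof. by move=> b0 ab; rewrite /clip01 ge_min ge_max b0 leeBlDr //= ab orbT. Qed.

Section reach_value.
Context {R : realType} {Q : finType} (F : {set Q}).

Definition reach_value (v : Q -> R) (q' : Q) : R := Num.max (q' \in F)%:R (v q').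

Lemma reach_value_itv01 (v : Q -> R) (q' : Q) :
  0 <= v q' <= 1 -> 0 <= reach_value v q' <= 1.
Proof.
by case/andP=> v0 v1; rewrite /reach_value le_max v0 orbT ge_max v1 andbT lern1 leq_b1.
Qed.

Lemma reach_value_le (v w : Q -> R) (q' : Q) :
  v q' <= w q' -> reach_value v q' <= reach_value w q'.
Proof. by move=> vw; rewrite le_max2. Qed.

End reach_value.

Section product_bellman.
Context {R : realType} {dZ dU dY : measure_display}.
Context {Z : measurableType dZ} {U : measurableType dU} {Y : measurableType dY}.
Context {AP Q : finType}.
Variables (tN : R.-pker (Z * U)%type ~> Z) (hN : Z -> Y) (L : Y -> {set AP}).
Variables (tau : Q -> {set AP} -> Q) (F : {set Q}).

Lemma bellmanE (mu : Z -> Q -> U) (V : Z -> Q -> R) (z : Z) (q : Q) :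
  bellman tN hN L tau F mu V z q =
  (\int[tN (z, mu z q)]_z' (reach_value F (V z') (tau q (L (hN z'))))%:E)%E.
Proof. by apply: eq_integral => z' _; rewrite sum_delta_mul. Qed.

Lemma measurable_reach_value (V : Z -> Q -> R) (q : Q) :
  measurable_fun setT hN -> label_measurable L ->
  (forall q', measurable_fun setT (V^~ q')) ->
  measurable_fun setT (fun z => reach_value F (V z) (tau q (L (hN z)))).
Proof.
move=> mhN mL mV.
apply: (@measurable_fun_select _ _ _ _ (fun z => L (hN z))
  (fun s z => reach_value F (V z) (tau q s))) => s.
  by have := mhN measurableT _ (mL s); rewrite setTI.
by apply: measurable_maxr => //; exact: measurable_cst.
Qed.

End product_bellman.

Arguments measurable_reach_value {R dZ dY Z Y AP Q hN L tau F V q}.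

Theorem lemma2 (R : realType) (dXh dUh dX dU dY : measure_display)
  (Xh : measurableType dXh) (Uh : measurableType dUh)
  (X : measurableType dX) (U : measurableType dU) (Y : measurableType dY)
  (d : Y -> Y -> R) (d_metric : is_metric d)
  (xh0 : Xh) (th : R.-pker (Xh * Uh)%type ~> Xh) (hh : Xh -> Y)
  (hh_meas : measurable_fun setT hh)
  (x0 : X) (t : R.-pker (X * U)%type ~> X) (h : X -> Y)
  (h_meas : measurable_fun setT h)
  (delta : R)
  (Uv : Uh -> Xh -> X -> probability U R)
  (Rel : set (Xh * X))
  (W : R.-pker ((Xh * X) * Uh)%type ~> (Xh * X)%type)
  (Hsim : sim_rel d 0 delta xh0 th hh x0 t h Uv Rel W)
  (AP Q : finType) (L : Y -> {set AP}) (L_meas : label_measurable L)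
  (q0 : Q) (F : {set Q}) (tau : Q -> {set AP} -> Q)
  (mu : Xh -> Q -> Uh)
  (V : Xh -> Q -> R) (Vpar : Xh -> X -> Q -> R)
  (V_range : forall xh q, 0 <= V xh q <= 1)
  (Vpar_range : forall xh x q, 0 <= Vpar xh x q <= 1)
  (V_meas : forall q, measurable_fun setT (fun xh => V xh q))
  (Vpar_meas : forall q, measurable_fun setT (fun z : Xh * X => Vpar z.1 z.2 q))
  (HV : forall xh x q, Rel (xh, x) -> V xh q <= Vpar xh x q) :
  forall xh x q, Rel (xh, x) ->
    (robust_bellman delta th hh L tau F mu V xh q
     <= bellman W (fun z : Xh * X => h z.2) L tau F
          (fun (z : Xh * X) (q : Q) => mu z.1 q)
          (fun (z : Xh * X) (q : Q) => Vpar z.1 z.2 q) (xh, x) q)%E.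
Proof.
move=> xh x q Rxxh.
have [mRel [_ sim]] := Hsim.
have [_ /(_ (mu xh q)) [marg [_ W_Rel]]] := sim xh x Rxxh.
pose vh y := reach_value F (V y) (tau q (L (hh y))).
pose vpar (z : Xh * X) :=
  reach_value F (fun q' => Vpar z.1 z.2 q') (tau q (L (h z.2))).
have vh01 y : 0 <= vh y <= 1 by exact: reach_value_itv01.
have vpar01 z : 0 <= vpar z <= 1 by exact: reach_value_itv01.
have mvh : measurable_fun setT vh.
  exact: measurable_reach_value hh_meas L_meas V_meas.
have mvpar : measurable_fun setT vpar.
  have mh2 : measurable_fun setT (fun z : Xh * X => h z.2).
    exact: measurableT_comp h_meas measurable_snd.
  exact: measurable_reach_value mh2 L_meas Vpar_meas.
have vh_le z : Rel z -> vh z.1 <= vpar z.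
  case: z => a b Rab; have [dab _] := sim a b Rab.
  by rewrite /vh /vpar /= (is_metric_le0 d_metric dab); exact/reach_value_le/HV.
rewrite /robust_bellman !bellmanE; apply: clip01_subr_le.
  by apply: integral_ge0 => z _; rewrite lee_fin; case/andP: (vpar01 z).
rewrite -(ge0_integral_fst_marginal _ _ (fun y => (vh y)%:E) marg); last 2 first.
- exact/measurable_EFinP.
- by move=> y; rewrite lee_fin; case/andP: (vh01 y).
apply: le_trans
  (integral_le_add_measureC _ Rel (fun z => vh z.1) vpar mRel _ mvpar _ _ vh_le) _.
- exact: measurableT_comp.
- by move=> z; exact: vh01.
- by move=> z; case/andP: (vpar01 z).
by apply: leeD2l; apply: measureC_le => //; exact: prob_kernel.
Qed.
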